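(* Let $K$ be an algebraically closed field of characteristic $0$, let $\mathcal{L}$ be a line of type $(1,1,0)$ in $\mathbb{P}^1\times\mathbb{P}^1\times\mathbb{P}^1$ over $K$, and let $X$ be a finite set of distinct points with $X\subseteq\mathcal{L}$ and $|X|=s$. Then $H_X(i,j,k)=\min\{k+1,s\}$ for all $(i,j,k)\in\mathbb{N}^3$.
   Context: Let $R=K[x_0,x_1,y_0,y_1,z_0,z_1]$ be $\mathbb{N}^3$-graded with $\deg x_i=(1,0,0)$, $\deg y_i=(0,1,0)$, $\deg z_i=(0,0,1)$. For a point $P=[a_0:a_1]\times[b_0:b_1]\times[c_0:c_1]$, $I(P)=(a_1x_0-a_0x_1,\,b_1y_0-b_0y_1,\,c_1z_0-c_0z_1)$, and for $X=\{P_1,\dots,P_s\}$, $I(X)=\bigcap_i I(P_i)$. The Hilbert function is $H_X(i,j,k)=\dim_K R_{i,j,k}-\dim_K I(X)_{i,j,k}$. A line of type $(1,1,0)$ is the subvariety defined by an ideal $(L,L')$ with $L\in R_{1,0,0}$, $L'\in R_{0,1,0}$ nonzero. *)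

From HB Require Import structures.
From mathcomp Require Import all_boot all_order all_algebra.
From mathcomp Require Import mpoly.
From Stdlib Require Import ClassicalEpsilon.

Set Implicit Arguments.
Unset Strict Implicit.
Unset Printing Implicit Defensive.

Import GRing.Theory.
Local Open Scope ring_scope.

Definition is_basis (K : fieldType) (V : lmodType K) (S : V -> Prop)
    (n : nat) (vs : n.-tuple V) : Prop :=
  [/\ (forall i : 'I_n, S (tnth vs i)),
      (forall c : 'I_n -> K, \sum_(i < n) c i *: tnth vs i = 0 ->
          forall i, c i = 0) &
      (forall v, S v -> exists c : 'I_n -> K, v = \sum_(i < n) c i *: tnth vs i)].

Definition has_dim (K : fieldType) (V : lmodType K) (S : V -> Prop) (n : nat) :
  Prop := exists vs : n.-tuple V, is_basis S vs.

(* dim_K S : the dimension of S (meaningful when S is finite-dimensional). *)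
Definition dimK (K : fieldType) (V : lmodType K) (S : V -> Prop) : nat :=
  epsilon (inhabits 0%N) (fun n => has_dim S n).

Definition R6 (K : fieldType) := {mpoly K[6]}.

Definition vx0 (K : fieldType) : R6 K := 'X_(inord 0).
Definition vx1 (K : fieldType) : R6 K := 'X_(inord 1).
Definition vy0 (K : fieldType) : R6 K := 'X_(inord 2).
Definition vy1 (K : fieldType) : R6 K := 'X_(inord 3).
Definition vz0 (K : fieldType) : R6 K := 'X_(inord 4).
Definition vz1 (K : fieldType) : R6 K := 'X_(inord 5).

Definition tdeg (m : 'X_{1..6}) : nat * nat * nat :=
  ((m (inord 0) + m (inord 1))%N, (m (inord 2) + m (inord 3))%N,
   (m (inord 4) + m (inord 5))%N).

Definition Rdeg (K : fieldType) (i j k : nat) : R6 K -> Prop :=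
  fun p => all (fun m => tdeg m == (i, j, k)) (msupp p).

(* Points of P^1 x P^1 x P^1, given by homogeneous coordinates               *)

Definition P1pt (K : fieldType) := (K * K)%type.
Definition P111pt (K : fieldType) := (P1pt K * P1pt K * P1pt K)%type.

Definition P1_valid (K : fieldType) (a : P1pt K) : bool := (a.1 != 0) || (a.2 != 0).
Definition pt_valid (K : fieldType) (P : P111pt K) : bool :=
  [&& P1_valid P.1.1, P1_valid P.1.2 & P1_valid P.2].

Definition P1_eq (K : fieldType) (a b : P1pt K) : bool := a.1 * b.2 == a.2 * b.1.
Definition pt_eq (K : fieldType) (P Q : P111pt K) : bool :=
  [&& P1_eq P.1.1 Q.1.1, P1_eq P.1.2 Q.1.2 & P1_eq P.2 Q.2].

Fixpoint pts_distinct (K : fieldType) (X : seq (P111pt K)) : bool :=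
  if X is P :: X' then all (fun Q => ~~ pt_eq P Q) X' && pts_distinct X' else true.

Definition gensP (K : fieldType) (P : P111pt K) : R6 K * R6 K * R6 K :=
  let: (a, b, c) := P in
  (a.2 *: vx0 K - a.1 *: vx1 K, b.2 *: vy0 K - b.1 *: vy1 K,
   c.2 *: vz0 K - c.1 *: vz1 K).

Definition in_ideal3 (K : fieldType) (g : R6 K * R6 K * R6 K) (p : R6 K) : Prop :=
  exists h1 h2 h3 : R6 K, p = h1 * g.1.1 + h2 * g.1.2 + h3 * g.2.

Definition in_IP (K : fieldType) (P : P111pt K) (p : R6 K) : Prop :=
  in_ideal3 (gensP P) p.

Definition in_IX (K : fieldType) (X : seq (P111pt K)) (p : R6 K) : Prop :=
  forall P, P \in X -> in_IP P p.

Definition IXdeg (K : fieldType) (X : seq (P111pt K)) (i j k : nat) : R6 K -> Prop :=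
  fun p => Rdeg i j k p /\ in_IX X p.

Definition HX (K : fieldType) (X : seq (P111pt K)) (i j k : nat) : nat :=
  (dimK (Rdeg (K:=K) i j k) - dimK (IXdeg X i j k))%N.

(* Lines of type (1,1,0): V(L, L') with L = l0 x0 + l1 x1, L' = m0 y0 + m1 y1 *)

Definition on_line110 (K : fieldType) (l m : K * K) (P : P111pt K) : bool :=
  (l.1 * P.1.1.1 + l.2 * P.1.1.2 == 0) && (m.1 * P.1.2.1 + m.2 * P.1.2.2 == 0).

From HB Require Import structures.
From mathcomp Require Import all_boot all_order all_algebra.
From mathcomp Require Import mpoly ring.
From Stdlib Require Import ClassicalEpsilon.

Set Implicit Arguments.
Unset Strict Implicit.
Unset Printing Implicit Defensive.

Import GRing.Theory.
Local Open Scope ring_scope.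

(* A form of tridegree (i,j,k) lies in I(P) iff it vanishes at P: modulo I(P)
   every monomial of that tridegree is its value at P times one fixed monomial.
   Hence I(X)_{i,j,k} is the kernel of evaluation at the points of X, and
   H_X(i,j,k) is the rank of the evaluation matrix of the monomial basis.  On the
   line, the x- and y-coordinates of the t-th point are fixed vectors scaled by
   nonzero numbers, so the rows of that matrix are, up to nonzero factors, the
   rows of the matrix (D_t c_t0^g c_t1^(k-g))_{g,t} with D_t nonzero and c_t the
   z-coordinates, which are pairwise non-proportional since the points are
   distinct.  This homogeneous Vandermonde matrix has rank min(k+1, s), because
   there are binary forms of degree k vanishing at all but one of any
   min(k+1, s) of the c_t. *)

(** * Dimension of subspaces with a finite basis *)

Section Dimension.
Variables (K : fieldType) (V : lmodType K).

Definition lincomb n (vs : n.-tuple V) (c : 'rV[K]_n) : V :=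
  \sum_(a < n) c 0 a *: tnth vs a.

Lemma lincombE n (vs : n.-tuple V) (c : 'I_n -> K) :
  \sum_(a < n) c a *: tnth vs a = lincomb vs (\row_a c a).
Proof. by apply: eq_bigr => a _; rewrite mxE. Qed.

Lemma lincombM n p (vs : n.-tuple V) (A : 'M[K]_(p, n)) (c : 'rV[K]_p) :
  lincomb [tuple lincomb vs (row b A) | b < p] c = lincomb vs (c *m A).
Proof.
rewrite /lincomb; under eq_bigr do rewrite tnth_mktuple scaler_sumr.
rewrite exchange_big /=; apply: eq_bigr => a _.
rewrite mxE scaler_suml; apply: eq_bigr => b _.
by rewrite !mxE scalerA.
Qed.

Lemma lincomb0 n (vs : n.-tuple V) : lincomb vs 0 = 0.
Proof. by apply: big1 => a _; rewrite mxE scale0r. Qed.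

Lemma is_basisE (S : V -> Prop) n (vs : n.-tuple V) : is_basis S vs <->
  [/\ forall a, S (tnth vs a), forall c, lincomb vs c = 0 -> c = 0
    & forall v, S v -> exists c, v = lincomb vs c].
Proof.
split=> [[vsS vs_free vs_span] | [vsS vs_free vs_span]]; split=> //.
- move=> c c0; apply/rowP => a; rewrite mxE; apply: vs_free a.
  by rewrite lincombE -c0; congr lincomb; apply/rowP => b; rewrite !mxE.
- by move=> v /vs_span [c ->]; exists (\row_a c a); rewrite lincombE.
- by move=> c; rewrite lincombE => /vs_free /rowP c0 a; have := c0 a; rewrite !mxE.
- by move=> v /vs_span [c ->]; exists (fun a => c 0 a).
Qed.

Lemma basis_size_leq (S : V -> Prop) n p (vs : n.-tuple V) (ws : p.-tuple V) :
  is_basis S vs -> is_basis S ws -> (p <= n)%N.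
Proof.
move=> /is_basisE [_ _ vs_span] /is_basisE [wsS ws_free _].
have [A wsA] : exists A : 'M[K]_(p, n), forall b, tnth ws b = lincomb vs (row b A).
  have /fin_all_exists [c wsc] b : exists c, tnth ws b = lincomb vs c.
    exact: vs_span.
  by exists (\matrix_b c b) => b; rewrite rowK.
have ws_vs : ws = [tuple lincomb vs (row b A) | b < p].
  by apply: eq_from_tnth => b; rewrite tnth_mktuple.
have /eqP <- : row_free A.
  by apply: inj_row_free => c cA0; apply: ws_free; rewrite ws_vs lincombM cA0 lincomb0.
exact: rank_leq_col.
Qed.

Lemma dimKE (S : V -> Prop) n : has_dim S n -> dimK S = n.
Proof.
have has_dim_inj n1 n2 : has_dim S n1 -> has_dim S n2 -> n1 = n2.
  move=> [vs vsB] [ws wsB]; apply/eqP.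
  by rewrite eqn_leq (basis_size_leq vsB wsB) (basis_size_leq wsB vsB).
move=> Sn; apply: has_dim_inj (Sn).
exact: epsilon_spec (inhabits 0%N) (has_dim S) (ex_intro _ n Sn).
Qed.

Section Kernel.
Variables (s : nat) (f : {linear V -> 'rV[K]_s}).
Variables (S : V -> Prop) (n : nat) (vs : n.-tuple V).
Hypotheses (vsB : is_basis S vs) (S_lincomb : forall c, S (lincomb vs c)).

Definition basis_mx : 'M[K]_(n, s) := \matrix_a f (tnth vs a).

Lemma linear_lincomb c : f (lincomb vs c) = c *m basis_mx.
Proof.
rewrite linear_sum mulmx_sum_row; apply: eq_bigr => a _.
by rewrite linearZ rowK.
Qed.

Lemma linear_basis_sub v : S v -> (f v <= basis_mx)%MS.
Proof. by case/is_basisE: vsB => _ _ /[apply] -[c ->]; rewrite linear_lincomb submxMl. Qed.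

Lemma has_dim_kernel (T : V -> Prop) :
  (forall v, T v <-> S v /\ f v = 0) -> has_dim T (n - \rank basis_mx).
Proof.
move=> TE; rewrite -mxrank_ker; pose B := row_base (kermx basis_mx).
case/is_basisE: vsB => _ vs_free vs_span.
exists [tuple lincomb vs (row b B) | b < _]; apply/is_basisE; split.
- move=> b; rewrite tnth_mktuple; apply/TE; split => //.
  rewrite linear_lincomb; apply/sub_kermxP.
  by rewrite (submx_trans (row_sub b B)) ?eq_row_base.
- move=> c; rewrite lincombM => /vs_free cB0.
  by apply: (row_free_inj (row_base_free _)); rewrite cB0 mul0mx.
- move=> v /TE [/vs_span [c ->]]; rewrite linear_lincomb => /sub_kermxP.
  by rewrite -(eq_row_base (kermx _)) => /submxP [d ->]; exists d; rewrite lincombM.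
Qed.

End Kernel.
End Dimension.

(** * Rank of homogeneous Vandermonde matrices *)

Lemma rank_geq_diag_colsub (K : fieldType) r s (A : 'M[K]_(r, s)) (g : 'I_r -> 'I_s) :
  (forall t, A t (g t) != 0) -> (forall t u, t != u -> A t (g u) = 0) ->
  (r <= \rank A)%N.
Proof.
move=> Adiag Aoff; have /eqP gA_rank : row_free (colsub g A).
  apply: inj_row_free => v /rowP vA0; apply/rowP => t; rewrite mxE.
  have := vA0 t; rewrite !mxE (bigD1 t) //= big1 ?addr0 => [|u ut].
    by move/eqP; rewrite mxE mulf_eq0 (negbTE (Adiag t)) orbF => /eqP.
  by rewrite mxE Aoff ?mulr0.
by have := mxrankM_maxl A (colsub g 1%:M); rewrite mulmx_colsub mulmx1 gA_rank.
Qed.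

Section BinaryForms.
Variable K : fieldType.

Definition form_eval (d : nat) (w : nat -> K) (x y : K) : K :=
  \sum_(g < d.+1) w g * x ^+ g * y ^+ (d - g).

Definition binary_form (d : nat) (F : K -> K -> K) :=
  exists w, forall x y, F x y = form_eval d w x y.

Lemma binary_form_ext d F G : F =2 G -> binary_form d F -> binary_form d G.
Proof. by move=> FG [w Fw]; exists w => x y; rewrite -FG. Qed.

Lemma binary_form1 : binary_form 0 (fun _ _ => 1).
Proof.
by exists (fun _ => 1) => x y; rewrite /form_eval big_ord_recl big_ord0 !expr0 !mulr1 addr0.
Qed.

Lemma binary_formM d F (a b : K) : binary_form d F ->
  binary_form d.+1 (fun x y => (a * x + b * y) * F x y).
Proof.
case=> w Fw; pose wx g := if g is g'.+1 then w g' else 0.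
pose wy g := if (g <= d)%N then w g else 0.
exists (fun g => a * wx g + b * wy g) => x y.
have Ex : form_eval d.+1 wx x y = x * form_eval d w x y.
  rewrite /form_eval big_ord_recl /= /wx /= !mul0r add0r mulr_sumr.
  by apply: eq_bigr => g _; rewrite /bump /= add1n subSS exprS; ring.
have Ey : form_eval d.+1 wy x y = y * form_eval d w x y.
  rewrite /form_eval big_ord_recr /= {2}/wy ltnn !mul0r addr0 mulr_sumr.
  apply: eq_bigr => g _; have gd : (g <= d)%N by rewrite -ltnS.
  by rewrite /wy /= gd subSn // exprS; ring.
have -> : form_eval d.+1 (fun g => a * wx g + b * wy g) x y =
    a * form_eval d.+1 wx x y + b * form_eval d.+1 wy x y.
  by rewrite /form_eval !mulr_sumr -big_split; apply: eq_bigr => g _ /=; ring.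
by rewrite Ex Ey Fw; ring.
Qed.

Lemma binary_form_prod (I : Type) (r : seq I) (P : pred I) (a b : I -> K) :
  binary_form (count P r) (fun x y => \prod_(u <- r | P u) (a u * x + b u * y)).
Proof.
elim: r => [|u r IH] /=.
  by apply: binary_form_ext binary_form1 => x y; rewrite big_nil.
case: (boolP (P u)) => Pu /=.
  apply: binary_form_ext (binary_formM (a u) (b u) IH) => x y.
  by rewrite big_cons Pu.
by apply: binary_form_ext IH => x y; rewrite big_cons (negbTE Pu).
Qed.

Lemma binary_formX d F (a b : K) e : binary_form d F ->
  binary_form (e + d) (fun x y => (a * x + b * y) ^+ e * F x y).
Proof.
move=> Fd; elim: e => [|e IH].
  by apply: binary_form_ext Fd => x y; rewrite expr0 mul1r.
apply: binary_form_ext (binary_formM a b IH) => x y.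
by rewrite exprS mulrA.
Qed.

End BinaryForms.

Section Interpolation.
Variables (K : fieldType) (r d : nat) (q : 'I_r -> K * K).
Hypotheses (r_le : (r <= d.+1)%N) (q_valid : forall t, P1_valid (q t))
  (q_dist : forall t u, t != u -> ~~ P1_eq (q t) (q u)).

Lemma form_interpolation t : exists w,
  form_eval d w (q t).1 (q t).2 != 0 /\
  forall u, u != t -> form_eval d w (q u).1 (q u).2 = 0.
Proof.
have count_other : count (fun u => u != t) (index_enum 'I_r) = r.-1.
  by rewrite -[r in RHS]card_ord -(cardC1 t) cardE /enum_mem size_filter.
(* [a x + b y] is x or y, whichever does not vanish at [q t]. *)
pose a : K := ((q t).1 != 0)%:R; pose b : K := ((q t).1 == 0)%:R.
pose F x y := (a * x + b * y) ^+ (d - r.-1) *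
  \prod_(u | u != t) ((q u).2 * x + - (q u).1 * y).
have [w Fw] : binary_form d F.
  have := binary_formX a b (d - r.-1) (binary_form_prod (index_enum 'I_r)
    (fun u => u != t) (fun u => (q u).2) (fun u => - (q u).1)).
  by rewrite count_other subnK // -ltnS prednK // (leq_ltn_trans _ (ltn_ord t)).
exists w; split=> [|u ut]; rewrite -Fw.
  rewrite mulf_neq0 ?expf_neq0 ?prodf_seq_neq0 //.
    rewrite /a /b; have := q_valid t; rewrite /P1_valid.
    have [-> | q1] := eqVneq (q t).1 0; first by rewrite mul0r add0r mul1r.
    by rewrite mul1r mul0r addr0.
  apply/allP => u _; apply/implyP => ut; move: (q_dist ut).
  by apply: contra; rewrite /P1_eq mulNr addr_eq0 opprK => /eqP ->; rewrite mulrC.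
by rewrite /F (bigD1 u) //= mulNr (mulrC (q u).2) addrN mul0r mulr0.
Qed.

End Interpolation.

Section HomogeneousVandermonde.
Variables (K : fieldType) (k s : nat) (c : 'I_s -> K * K) (D : 'I_s -> K).

Definition hvandermonde : 'M[K]_(k.+1, s) :=
  \matrix_(g < k.+1, u < s) (D u * (c u).1 ^+ g * (c u).2 ^+ (k - g)).

Hypotheses (D_neq0 : forall u, D u != 0) (c_valid : forall u, P1_valid (c u))
  (c_dist : forall u t, u != t -> ~~ P1_eq (c u) (c t)).

Lemma rank_hvandermonde : \rank hvandermonde = minn k.+1 s.
Proof.
apply/eqP; rewrite eqn_leq leq_min rank_leq_row rank_leq_col /=.
pose r := minn k.+1 s.
pose emb (t : 'I_r) : 'I_s := widen_ord (geq_minr k.+1 s) t.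
have emb_neq t u : t != u -> emb t != emb u.
  by apply: contra => /eqP /(congr1 val) /= /val_inj ->.
have /fin_all_exists [w wP] := form_interpolation (geq_minl k.+1 s)
  (fun t => c_valid (emb t)) (fun t u tu => c_dist (emb_neq t u tu)).
pose W : 'M[K]_(r, k.+1) := \matrix_(t, g) w t g.
have WE t u : (W *m hvandermonde) t u = D u * form_eval k (w t) (c u).1 (c u).2.
  rewrite mxE /form_eval mulr_sumr; apply: eq_bigr => g _; rewrite !mxE; ring.
apply: leq_trans (mxrankM_maxr W _).
apply: (rank_geq_diag_colsub (g := emb)) => [t | t u tu]; rewrite WE.
  by rewrite mulf_neq0 //; case: (wP t).
by case: (wP t) => _ ->; rewrite ?mulr0 // eq_sym.
Qed.

End HomogeneousVandermonde.

(** * Forms vanishing at a point of P^1 x P^1 x P^1 *)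

Lemma big_ord6 (T : Type) (idx : T) (op : Monoid.law idx) (F : 'I_6 -> T) :
  \big[op/idx]_(q < 6) F q = op (op (op (op (op (F (inord 0)) (F (inord 1)))
    (F (inord 2))) (F (inord 3))) (F (inord 4))) (F (inord 5)).
Proof.
rewrite !big_ord_recr big_ord0 /= Monoid.mul1m.
by congr (op (op (op (op (op _ _) _) _) _) _); congr F; apply/val_inj; rewrite /= inordK.
Qed.

Section PolynomialRing.
Variable K : fieldType.
Local Notation R := (R6 K).

Definition coords (P : P111pt K) (q : 'I_6) : K :=
  nth 0 [:: P.1.1.1; P.1.1.2; P.1.2.1; P.1.2.2; P.2.1; P.2.2] q.

Lemma mpolyX6 (m : 'X_{1..6}) : 'X_[m] =
  vx0 K ^+ m (inord 0) * vx1 K ^+ m (inord 1) * vy0 K ^+ m (inord 2) *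
  vy1 K ^+ m (inord 3) * vz0 K ^+ m (inord 4) * vz1 K ^+ m (inord 5) :> R.
Proof. by rewrite mpolyXE_id big_ord6. Qed.

Lemma meval_mpolyX6 (P : P111pt K) (m : 'X_{1..6}) : ('X_[m] : R).@[coords P] =
  P.1.1.1 ^+ m (inord 0) * P.1.1.2 ^+ m (inord 1) * P.1.2.1 ^+ m (inord 2) *
  P.1.2.2 ^+ m (inord 3) * P.2.1 ^+ m (inord 4) * P.2.2 ^+ m (inord 5).
Proof. by rewrite mevalX big_ord6 /coords !inordK. Qed.

Lemma meval_gensP (P : P111pt K) :
  [/\ (gensP P).1.1.@[coords P] = 0, (gensP P).1.2.@[coords P] = 0
    & (gensP P).2.@[coords P] = 0].
Proof.
case: P => [[a b] c]; rewrite /= /vx0 /vx1 /vy0 /vy1 /vz0 /vz1.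
by rewrite !mevalB !mevalZ !mevalXU /coords !inordK /=; split; rewrite mulrC subrr.
Qed.

Lemma in_IP_meval (P : P111pt K) p : in_IP P p -> p.@[coords P] = 0.
Proof.
case: (meval_gensP P) => g1 g2 g3 [h1 [h2 [h3 ->]]].
by rewrite !mevalD !mevalM g1 g2 g3 !mulr0 !addr0.
Qed.

Section Ideal.
Variable g : R * R * R.
Local Notation I := (in_ideal3 g).

Lemma in_ideal3_0 : I 0.
Proof. by exists 0, 0, 0; rewrite !mul0r !addr0. Qed.

Lemma in_ideal3D p q : I p -> I q -> I (p + q).
Proof.
case=> [a [b [c ->]]] [a' [b' [c' ->]]].
by exists (a + a'), (b + b'), (c + c'); rewrite !mulrDl; ring.
Qed.

Lemma in_ideal3Ml q p : I p -> I (q * p).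
Proof. by case=> [a [b [c ->]]]; exists (q * a), (q * b), (q * c); ring. Qed.

Lemma in_ideal3Z a p : I p -> I (a *: p).
Proof. by rewrite -mul_mpolyC; apply: in_ideal3Ml. Qed.

Lemma in_ideal3_sum (J : Type) (r : seq J) (P : pred J) (F : J -> R) :
  (forall x, P x -> I (F x)) -> I (\sum_(x <- r | P x) F x).
Proof. by move=> IF; elim/big_ind: _ => //; [exact: in_ideal3_0 | exact: in_ideal3D]. Qed.

Lemma in_ideal3_congM a a' b b' : I (a - a') -> I (b - b') -> I (a * b - a' * b').
Proof.
move=> Ia Ib; have -> : a * b - a' * b' = a * (b - b') + b' * (a - a') by ring.
by apply: in_ideal3D; apply: in_ideal3Ml.
Qed.

Lemma in_ideal3_congX a b n : I (a - b) -> I (a ^+ n - b ^+ n).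
Proof.
move=> Iab; elim: n => [|n IH]; first by rewrite !expr0 subrr; apply: in_ideal3_0.
by rewrite !exprS; apply: in_ideal3_congM.
Qed.

Lemma in_ideal3_gens : [/\ I g.1.1, I g.1.2 & I g.2].
Proof. by split; [exists 1, 0, 0 | exists 0, 1, 0 | exists 0, 0, 1]; ring. Qed.

End Ideal.

(* With [w] the variable whose coordinate at [a] is nonzero, [P1_scale a] times
   [u], resp. [v], is congruent to [a.1 w], resp. [a.2 w], modulo [a.2 u - a.1 v]. *)
Definition P1_scale (a : P1pt K) : K := if a.2 != 0 then a.2 else a.1.
Definition P1_pick (a : P1pt K) (u v : R) : R := if a.2 != 0 then v else u.

Lemma P1_scale_neq0 a : P1_valid a -> P1_scale a != 0.
Proof. by rewrite /P1_valid /P1_scale; have [-> | ->] := eqVneq a.2 0; rewrite ?orbF. Qed.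

Lemma P1_monomial_cong g (a : P1pt K) (u v : R) e1 e2 :
  P1_valid a -> in_ideal3 g (a.2 *: u - a.1 *: v) ->
  in_ideal3 g (P1_scale a ^+ (e1 + e2) *: (u ^+ e1 * v ^+ e2) -
               (a.1 ^+ e1 * a.2 ^+ e2) *: P1_pick a u v ^+ (e1 + e2)).
Proof.
move=> a_valid Ia.
have [Iu Iv] : in_ideal3 g (P1_scale a *: u - a.1 *: P1_pick a u v) /\
               in_ideal3 g (P1_scale a *: v - a.2 *: P1_pick a u v).
  rewrite /P1_scale /P1_pick; case: eqP a_valid => [a2 | _] /= a1.
    rewrite a2 scale0r subr0 subrr; split; first exact: in_ideal3_0.
    by move: Ia; rewrite a2 scale0r sub0r => /(in_ideal3Z (-1)); rewrite scaleN1r opprK.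
  by rewrite subrr; split=> //; exact: in_ideal3_0.
have := in_ideal3_congM (in_ideal3_congX e1 Iu) (in_ideal3_congX e2 Iv).
rewrite -!mul_mpolyC !rmorphM !rmorphXn /=.
congr in_ideal3; rewrite !exprMn !exprD; ring.
Qed.

Definition pt_scale (P : P111pt K) i j k : K :=
  P1_scale P.1.1 ^+ i * P1_scale P.1.2 ^+ j * P1_scale P.2 ^+ k.

Definition pt_monomial (P : P111pt K) i j k : R :=
  P1_pick P.1.1 (vx0 K) (vx1 K) ^+ i * P1_pick P.1.2 (vy0 K) (vy1 K) ^+ j *
  P1_pick P.2 (vz0 K) (vz1 K) ^+ k.

Lemma in_IP_monomial_cong (P : P111pt K) (m : 'X_{1..6}) i j k :
  pt_valid P -> tdeg m = (i, j, k) ->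
  in_IP P (pt_scale P i j k *: 'X_[m] - ('X_[m] : R).@[coords P] *: pt_monomial P i j k).
Proof.
case: P => [[a b] c] /and3P [a_valid b_valid c_valid] [<- <- <-].
case: (in_ideal3_gens (gensP ((a, b), c))) => /= Ix Iy Iz.
have := in_ideal3_congM (in_ideal3_congM
  (P1_monomial_cong (m (inord 0)) (m (inord 1)) a_valid Ix)
  (P1_monomial_cong (m (inord 2)) (m (inord 3)) b_valid Iy))
  (P1_monomial_cong (m (inord 4)) (m (inord 5)) c_valid Iz).
rewrite /in_IP /pt_scale /pt_monomial meval_mpolyX6 mpolyX6 /=.
by congr in_ideal3; rewrite -!mul_mpolyC !rmorphM !rmorphXn /=; ring.
Qed.

Lemma Rdeg_in_IP (P : P111pt K) i j k p :
  pt_valid P -> Rdeg i j k p -> p.@[coords P] = 0 -> in_IP P p.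
Proof.
move=> P_valid p_deg p0; have C_neq0 : pt_scale P i j k != 0.
  by case/and3P: P_valid => *; rewrite !mulf_neq0 // expf_neq0 // P1_scale_neq0.
suff : in_IP P (pt_scale P i j k *: p - p.@[coords P] *: pt_monomial P i j k).
  rewrite p0 scale0r subr0 => /(in_ideal3Z (pt_scale P i j k)^-1).
  by rewrite scalerA mulVf // scale1r.
have -> : pt_scale P i j k *: p - p.@[coords P] *: pt_monomial P i j k =
    \sum_(m <- msupp p) p@_m *: (pt_scale P i j k *: 'X_[m] -
      ('X_[m] : R).@[coords P] *: pt_monomial P i j k).
  have -> : p.@[coords P] = \sum_(m <- msupp p) p@_m * ('X_[m] : R).@[coords P].
    by rewrite {1}[p]mpolyE raddf_sum; apply: eq_bigr => m _ /=; rewrite mevalZ.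
  rewrite {1}[p]mpolyE scaler_sumr scaler_suml -sumrB; apply: eq_bigr => m _.
  by rewrite scalerBr !scalerA mulrC.
rewrite big_seq; apply: in_ideal3_sum => m m_supp; apply/in_ideal3Z/in_IP_monomial_cong => //.
by apply/eqP; move/allP: p_deg; apply.
Qed.
End PolynomialRing.

Section MonomialBasis.
Variables (K : fieldType) (i j k : nat).

Definition tdeg_monomials : seq 'X_{1..6} :=
  [seq bmnm m | m <- enum {: 'X_{1..6 < (i + j + k).+1}} & tdeg (bmnm m) == (i, j, k)].

Lemma tdeg_monomials_uniq : uniq tdeg_monomials.
Proof. by rewrite map_inj_uniq ?filter_uniq ?index_enum_uniq // => m m' /val_inj. Qed.

Lemma mem_tdeg_monomials m : (m \in tdeg_monomials) = (tdeg m == (i, j, k)).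
Proof.
apply/idP/idP => [/mapP [m'] | m_deg]; first by rewrite mem_filter => /andP [? _] ->.
have m_bound : (mdeg m < (i + j + k).+1)%N.
  by move: m_deg; rewrite mdegE big_ord6 /tdeg => /eqP [<- <- <-]; rewrite ltnS !addnA.
by apply/mapP; exists (BMultinom m_bound); rewrite // mem_filter m_deg mem_enum.
Qed.

Local Notation mono a := (tnth (in_tuple tdeg_monomials) a).

Definition monomial_basis : (size tdeg_monomials).-tuple (R6 K) :=
  map_tuple (fun m => 'X_[m]) (in_tuple tdeg_monomials).

Lemma eq_mono a b : (mono a == mono b) = (a == b).
Proof. by rewrite !(tnth_nth 0%MM) nth_uniq ?tdeg_monomials_uniq. Qed.

Lemma RdegP (p : R6 K) : Rdeg i j k p <-> forall m, tdeg m != (i, j, k) -> p@_m = 0.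
Proof.
split=> [/allP p_deg m m_deg | p_deg]; last first.
  by apply/allP => m; rewrite mcoeff_msupp; apply: contraR => /p_deg ->; rewrite eqxx.
by apply/eqP; rewrite -[_ == 0]negbK -mcoeff_msupp; exact: contra (p_deg m) m_deg.
Qed.

Lemma mcoeff_lincomb c m :
  (lincomb monomial_basis c)@_m = \sum_a c 0 a * (mono a == m)%:R.
Proof.
rewrite /lincomb raddf_sum; apply: eq_bigr => a _ /=.
by rewrite mcoeffZ tnth_map mcoeffX.
Qed.

Lemma Rdeg_lincomb c : Rdeg i j k (lincomb monomial_basis c).
Proof.
apply/RdegP => m m_deg; rewrite mcoeff_lincomb big1 // => a _.
case: eqP => [mono_m | _]; last by rewrite mulr0.
move: (mem_tnth a (in_tuple tdeg_monomials)).
by rewrite mono_m mem_tdeg_monomials (negPf m_deg).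
Qed.

Lemma monomial_basisP : is_basis (Rdeg i j k) monomial_basis.
Proof.
apply/is_basisE; split=> [a | c c0 | p p_deg].
- by rewrite tnth_map /Rdeg msuppX /= andbT -mem_tdeg_monomials mem_tnth.
- apply/rowP => b; have := congr1 (mcoeff (mono b)) c0.
  rewrite mcoeff_lincomb mcoeff0 (bigD1 b) //= eqxx mulr1 big1 ?addr0 ?mxE //.
  by move=> a ab; rewrite eq_mono (negPf ab) mulr0.
- exists (\row_a p@_(mono a)); apply/mpolyP => m; rewrite mcoeff_lincomb.
  have [m_mono | m_deg] := boolP (m \in tdeg_monomials); last first.
    rewrite (proj1 (RdegP p) p_deg) -?mem_tdeg_monomials // big1 // => a _.
    case: eqP => [mono_m | _]; last by rewrite mulr0.
    by rewrite -mono_m mem_tnth in m_deg.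
  have m_idx : (index m tdeg_monomials < size tdeg_monomials)%N by rewrite index_mem.
  have mono_m : mono (Ordinal m_idx) = m by rewrite (tnth_nth 0%MM) nth_index.
  rewrite (bigD1 (Ordinal m_idx)) //= mxE mono_m eqxx mulr1 big1 ?addr0 // => a a_ne.
  by rewrite -mono_m eq_mono (negPf a_ne) mulr0.
Qed.
End MonomialBasis.

Section Line.
Variable K : fieldType.
Implicit Types (l a b : K * K).

Definition line_coord l a : K := if l.1 != 0 then a.2 / l.1 else - a.1 / l.2.

Lemma line_coordE l a : P1_valid l -> l.1 * a.1 + l.2 * a.2 = 0 ->
  a = (line_coord l a * - l.2, line_coord l a * l.1).
Proof.
rewrite /P1_valid /line_coord; case: a => a1 a2 /= l_valid.
have [l1 | l1] := eqVneq l.1 0.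
  rewrite l1 eqxx /= mul0r add0r in l_valid * => /eqP.
  rewrite mulf_eq0 (negPf l_valid) /= => /eqP ->.
  by congr pair; field.
move=> la /=; congr pair; last by field.
by apply: (mulfI l1); rewrite -[LHS]subr0 -la; field.
Qed.

Lemma line_coord_neq0 l a : P1_valid l -> l.1 * a.1 + l.2 * a.2 = 0 ->
  P1_valid a -> line_coord l a != 0.
Proof.
move=> l_valid la; rewrite {1}(line_coordE l_valid la) /P1_valid /=.
by apply: contraTneq => ->; rewrite !mul0r eqxx.
Qed.

Lemma P1_eq_on_line l a b : P1_valid l ->
  l.1 * a.1 + l.2 * a.2 = 0 -> l.1 * b.1 + l.2 * b.2 = 0 -> P1_eq a b.
Proof.
move=> l_valid /(line_coordE l_valid) -> /(line_coordE l_valid) ->.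
by rewrite /P1_eq /=; apply/eqP; ring.
Qed.

Lemma on_line110_pt_eq l m (P Q : P111pt K) : P1_valid l -> P1_valid m ->
  on_line110 l m P -> on_line110 l m Q -> pt_eq P Q = P1_eq P.2 Q.2.
Proof.
move=> l_valid m_valid /andP [/eqP Pl /eqP Pm] /andP [/eqP Ql /eqP Qm].
by rewrite /pt_eq (P1_eq_on_line l_valid Pl Ql) (P1_eq_on_line m_valid Pm Qm).
Qed.

End Line.

(** * Points on a line of type (1,1,0) *)

Lemma P1_eq_sym (K : fieldType) (a b : P1pt K) : P1_eq a b = P1_eq b a.
Proof. by rewrite /P1_eq eq_sym mulrC [b.2 * _]mulrC. Qed.

Lemma pts_distinct_nth (K : fieldType) (X : seq (P111pt K)) x0 u t :
  pts_distinct X -> (u < t < size X)%N -> ~~ pt_eq (nth x0 X u) (nth x0 X t).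
Proof.
elim: X u t => [|P X IH] u t /=; first by rewrite ltn0 andbF.
move=> /andP [X_P X_dist].
case: u t => [|u] [|t] //= => [tX | utX]; last exact: IH.
by move/allP: X_P; apply; rewrite mem_nth.
Qed.

Section PointsOnLine.
Variables (K : fieldType) (l m : K * K).
Hypotheses (l_valid : P1_valid l) (m_valid : P1_valid m).
Variable X : seq (P111pt K).
Hypotheses (X_valid : all (@pt_valid K) X) (X_dist : pts_distinct X)
  (X_on : all (on_line110 l m) X).

Local Notation s := (size X).
Local Notation pt t := (tnth (in_tuple X) t).

Definition eval_pts (p : R6 K) : 'rV[K]_s := \row_t p.@[coords (pt t)].

Fact eval_pts_is_linear : linear eval_pts.
Proof. by move=> a p q; apply/rowP => t; rewrite !mxE mevalD mevalZ. Qed.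

HB.instance Definition _ :=
  GRing.isLinear.Build K (R6 K) 'rV[K]_s *:%R eval_pts eval_pts_is_linear.

Lemma pt_valid_on t : pt_valid (pt t) /\ on_line110 l m (pt t).
Proof. by split; [move/allP: X_valid | move/allP: X_on]; apply; apply: mem_tnth. Qed.

Lemma IXdegE i j k p : IXdeg X i j k p <-> Rdeg i j k p /\ eval_pts p = 0.
Proof.
split=> [[p_deg p_IX] | [p_deg /rowP p0]]; split=> //.
  by apply/rowP => t; rewrite !mxE; apply/in_IP_meval/p_IX/mem_tnth.
move=> P /(tnthP (in_tuple X)) [t ->].
by apply: Rdeg_in_IP p_deg _; [case: (pt_valid_on t) | have := p0 t; rewrite !mxE].
Qed.

Definition xcoord t := line_coord l (pt t).1.1.
Definition ycoord t := line_coord m (pt t).1.2.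

Lemma pt_coordsE t : (pt t).1.1 = (xcoord t * - l.2, xcoord t * l.1) /\
                     (pt t).1.2 = (ycoord t * - m.2, ycoord t * m.1).
Proof.
by case: (pt_valid_on t) => _ /andP [/eqP Pl /eqP Pm]; split; apply: line_coordE.
Qed.

Variables i j k : nat.

Definition line_weight t := xcoord t ^+ i * ycoord t ^+ j.

Local Notation V := (hvandermonde k (fun t => (pt t).2) line_weight).

Definition line_factor (mo : 'X_{1..6}) : K :=
  (- l.2) ^+ mo (inord 0) * l.1 ^+ mo (inord 1) *
  (- m.2) ^+ mo (inord 2) * m.1 ^+ mo (inord 3).

Lemma eval_pts_monomial mo : tdeg mo = (i, j, k) ->
  eval_pts 'X_[mo] = line_factor mo *: row (inord (mo (inord 4))) V.
Proof.
rewrite /tdeg => -[mx my mz].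
have mo4 : (mo (inord 4) < k.+1)%N by rewrite ltnS -mz leq_addr.
apply/rowP => t; rewrite !mxE meval_mpolyX6 inordK //.
have [-> ->] := pt_coordsE t; rewrite /line_weight /line_factor /=.
by rewrite -mx -my -mz addKn !exprD !exprMn; ring.
Qed.

(* The x-degree sits on x0 if the x0-coordinate [-l.2] along the line is nonzero,
   otherwise on x1; likewise for y.  So [line_factor] does not vanish on it. *)
Definition line_monomial g : 'X_{1..6} :=
  let ex := if l.2 != 0 then i else 0%N in let ey := if m.2 != 0 then j else 0%N in
  [multinom nth 0%N [:: ex; i - ex; ey; j - ey; g; k - g] q | q < 6].

Lemma tdeg_line_monomial g : (g <= k)%N -> tdeg (line_monomial g) = (i, j, k).
Proof. by move=> gk; rewrite /tdeg !mnmE !inordK //= !subnKC //; case: ifP. Qed.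

Lemma line_factor_neq0 g : line_factor (line_monomial g) != 0.
Proof.
rewrite /line_factor !mnmE !inordK //=.
have l1 : l.2 = 0 -> l.1 != 0 by move=> l2; move: l_valid; rewrite /P1_valid l2 eqxx orbF.
have m1 : m.2 = 0 -> m.1 != 0 by move=> m2; move: m_valid; rewrite /P1_valid m2 eqxx orbF.
by have [/l1 ? | ?] := eqVneq l.2 0; have [/m1 ? | ?] := eqVneq m.2 0;
  rewrite ?subnn ?subn0 ?expr0 ?mulr1 ?mul1r ?mulf_neq0 ?expf_neq0 ?oppr_eq0.
Qed.

Lemma rank_eval_monomials : \rank (basis_mx eval_pts (monomial_basis K i j k)) = \rank V.
Proof.
apply/eqP; rewrite eqn_leq; apply/andP; split; apply: mxrankS; apply/row_subP => a.
  rewrite rowK tnth_map /= eval_pts_monomial ?scalemx_sub ?row_sub //.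
  by apply/eqP; rewrite -mem_tdeg_monomials mem_tnth.
have ak : (a <= k)%N by rewrite -ltnS.
have := eval_pts_monomial (tdeg_line_monomial ak).
rewrite [line_monomial a (inord 4)]mnmE inordK //= inord_val => eval_a.
have -> : row a V = (line_factor (line_monomial a))^-1 *: eval_pts 'X_[line_monomial a].
  by rewrite eval_a scalerA mulVf ?line_factor_neq0 // scale1r.
apply/scalemx_sub/(linear_basis_sub eval_pts (monomial_basisP K i j k)).
by rewrite /Rdeg msuppX /= andbT tdeg_line_monomial.
Qed.

Lemma z_coords_distinct (u t : 'I_s) : u != t -> ~~ P1_eq (pt u).2 (pt t).2.
Proof.
have z_dist (u' t' : 'I_s) : (u' < t')%N -> ~~ P1_eq (pt u').2 (pt t').2.
  move=> ut; rewrite -(on_line110_pt_eq l_valid m_valid (proj2 (pt_valid_on u'))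
    (proj2 (pt_valid_on t'))).
  pose x0 := pt u'; rewrite !(tnth_nth x0).
  by apply: (pts_distinct_nth x0 X_dist); rewrite ut /=.
move=> ut; case: (ltngtP u t) => [/z_dist // | /z_dist | /val_inj tu].
  by rewrite P1_eq_sym.
by rewrite tu eqxx in ut.
Qed.

Lemma HX_on_line : HX X i j k = minn k.+1 s.
Proof.
have R_dim := dimKE (ex_intro _ _ (monomial_basisP K i j k)).
have IX_dim := dimKE (has_dim_kernel (monomial_basisP K i j k)
  (@Rdeg_lincomb K i j k) (@IXdegE i j k)).
rewrite /HX R_dim IX_dim subKn ?rank_leq_row // rank_eval_monomials rank_hvandermonde //.
- move=> t; case: (pt_valid_on t) => /and3P [x_valid y_valid _] /andP [/eqP xl /eqP ym].
  by rewrite mulf_neq0 // expf_neq0 // line_coord_neq0.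
- by move=> t; case: (pt_valid_on t) => /and3P [].
- exact: z_coords_distinct.
Qed.

End PointsOnLine.

Theorem lemma2p6 (K : closedFieldType) (hchar : [pchar K] =i pred0)
  (l m : K * K) (hl : (l.1 != 0) || (l.2 != 0)) (hm : (m.1 != 0) || (m.2 != 0))
  (X : seq (P111pt K)) (s : nat)
  (hvalid : all (@pt_valid K) X) (hdist : pts_distinct X)
  (honL : all (on_line110 l m) X) (hs : size X = s) :
  forall i j k : nat, HX X i j k = minn k.+1 s.
Proof. by move=> i j k; rewrite -hs; exact: (HX_on_line hl hm). Qed.
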